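(* Let $k\ge 1$ and let $f:2^{[k]}\to\mathbb{R}$ be submodular, normalized and increasing. Fix any map $\mathrm{sign}^*:\mathbb{R}^k\to\mathcal{Y}$ with $\mathrm{sign}^*(u)_i=\mathrm{sign}(u_i)$ whenever $u_i\neq 0$ (ties at $u_i=0$ broken arbitrarily). Then the pair $(L^f,\mathrm{sign}^* )$ is consistent (equivalently, calibrated) with respect to the structured binary classification loss $\ell^f$ if and only if $f$ is modular.
   Context: $[k]=\{1,\dots,k\}$, $\mathcal{Y}=\{-1,1\}^k$, $\Delta_\mathcal{Y}$ is the set of probability distributions on $\mathcal{Y}$. For $u,u'\in\mathbb{R}^k$, $u\odot u'$ is the entrywise product; $\mathbbm{1}$ is the all-ones vector; $(x)_+$ is the entrywise positive part. A set function $f:2^{[k]}\to\mathbb{R}$ is submodular if $f(S)+f(T)\ge f(S\cup T)+f(S\cap T)$ for all $S,T\subseteq[k]$, modular if this always holds with equality, increasing if $f(S\cup T)\ge f(S)$ for all disjoint $S,T$, and normalized if $f(\emptyset)=0$. The Lovász extension of $f$ is $F(x)=\max_{\pi}\sum_{i=1}^k x_{\pi_i}\big(f(\{\pi_1,\dots,\pi_i\})-f(\{\pi_1,\dots,\pi_{i-1}\})\big)$ for $x\in\mathbb{R}^k_+$, the max over permutations $\pi$ of $[k]$. The Lovász hinge is $L^f:\mathbb{R}^k\times\mathcal{Y}\to\mathbb{R}$, $L^f(u,y)=F((\mathbbm{1}-u\odot y)_+)$. The target loss is $\ell^f:\mathcal{Y}\times\mathcal{Y}\to\mathbb{R}$,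 $\ell^f(r,y)=f(\{i\in[k]: r_i\neq y_i\})$. For a loss $\ell$ and $p\in\Delta_\mathcal{Y}$ write $\ell(r;p)=\sum_{y}p_y\,\ell(r,y)$. A pair $(L,\psi)$ with $\psi:\mathbb{R}^k\to\mathcal{R}$ is calibrated with respect to a loss $\ell:\mathcal{R}\times\mathcal{Y}\to\mathbb{R}$ ($\mathcal{R}$ finite) if for every $p\in\Delta_\mathcal{Y}$, $\inf\{L(u;p): \psi(u)\notin\arg\min_{r\in\mathcal{R}}\ell(r;p)\}>\inf_{u\in\mathbb{R}^k}L(u;p)$; in this setting consistency is equivalent to calibration. *)

From HB Require Import structures.
From mathcomp Require Import all_boot all_order all_algebra all_fingroup.
From mathcomp Require Import classical_sets reals constructive_ereal ereal.
Set Implicit Arguments. Unset Strict Implicit. Unset Printing Implicit Defensive.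
Import Order.TTheory GRing.Theory Num.Theory.
Local Open Scope ring_scope.

Section Defs.
Variables (R : realType) (k : nat).

(* labels Y = {-1,1}^k, encoded as boolean vectors: true <-> +1, false <-> -1 *)
Definition Ylab := {ffun 'I_k -> bool}.
Definition yval (y : Ylab) (i : 'I_k) : R := if y i then 1 else -1.

Definition submodular (f : {set 'I_k} -> R) :=
  forall S T, f (S :|: T) + f (S :&: T) <= f S + f T.
Definition modular (f : {set 'I_k} -> R) :=
  forall S T, f S + f T = f (S :|: T) + f (S :&: T).
Definition increasing (f : {set 'I_k} -> R) :=
  forall S T, S :&: T = finset.set0 -> f S <= f (S :|: T).
Definition normalized (f : {set 'I_k} -> R) := f finset.set0 = 0.

Definition prefix (s : {perm 'I_k}) (j : nat) : {set 'I_k} :=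
  [set s i | i : 'I_k & (i < j)%N].

Definition lovasz_term (f : {set 'I_k} -> R) (x : 'I_k -> R) (s : {perm 'I_k}) : R :=
  \sum_(i < k) x (s i) * (f (prefix s i.+1) - f (prefix s i)).

Definition lovasz (f : {set 'I_k} -> R) (x : 'I_k -> R) : R :=
  \big[Num.max/lovasz_term f x 1%g]_(s : {perm 'I_k}) lovasz_term f x s.

Definition lovasz_hinge (f : {set 'I_k} -> R) (u : 'I_k -> R) (y : Ylab) : R :=
  lovasz f (fun i => Num.max (1 - u i * yval y i) 0).

Definition target_loss (f : {set 'I_k} -> R) (r y : Ylab) : R :=
  f [set i | r i != y i].

Definition is_distr (p : Ylab -> R) :=
  (forall y, 0 <= p y) /\ \sum_(y : Ylab) p y = 1.

Definition exp_loss {A : Type} (L : A -> Ylab -> R) (p : Ylab -> R) (a : A) : R :=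
  \sum_(y : Ylab) p y * L a y.

Definition calibrated (L : ('I_k -> R) -> Ylab -> R) (psi : ('I_k -> R) -> Ylab)
  (l : Ylab -> Ylab -> R) :=
  forall p : Ylab -> R, is_distr p ->
    (ereal_inf [set (exp_loss L p u)%:E | u in
        [set u | ~ (forall r : Ylab, (exp_loss l p (psi u) <= exp_loss l p r)%R)]]
     > ereal_inf [set (exp_loss L p u)%:E | u in [set: 'I_k -> R]])%E.

Definition sign_star (psi : ('I_k -> R) -> Ylab) :=
  forall u i, u i != 0 -> psi u i = (0 < u i).

End Defs.

From Pilot Require Import Defs.
From HB Require Import structures.
From mathcomp Require Import all_boot all_order all_algebra all_fingroup.
From mathcomp Require Import classical_sets reals constructive_ereal ereal.
From mathcomp Require Import ring lra.
Set Implicit Arguments. Unset Strict Implicit. Unset Printing Implicit Defensive.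

Import Order.TTheory GRing.Theory Num.Theory.
Local Open Scope ring_scope.

(* If f is modular, its Lovasz extension is linear,
   F(x) = sum_l x_l f({l}), so the expected Lovasz hinge splits into the
   one-dimensional risks a_l (1 - u_l)_+ + b_l (1 + u_l)_+ weighted by f({l}),
   where a_l and b_l are the probabilities of y_l = 1 and y_l = -1.  Such a risk
   is at least 2 min(a_l, b_l), with equality at the Bayes sign, and exceeds it
   by |a_l - b_l| as soon as sign u_l is strictly wrong; hence every u with a
   suboptimal prediction pays a uniform extra amount.
   If f is submodular but not modular, then f(P) + f(P^c) > f([k]) for some P.
   Put mass 1/2 on each of the constant labels 1 and -1.  Every u then has
   expected hinge at least f([k]), while u = e on P and -e off P has expected
   hinge at most (1 + e) f([k]) and predicts the indicator of P, whose expected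
   target loss (f(P) + f(P^c))/2 exceeds f([k])/2, that of the constant label 1. *)

Section SetFunction.
Variables (R : realType) (k : nat) (f : {set 'I_k} -> R).

Lemma increasing_le : increasing f ->
  forall S T : {set 'I_k}, S \subset T -> f S <= f T.
Proof.
move=> finc S T sST; have := finc S (T :\: S).
have -> : S :|: T :\: S = T.
  apply/setP=> x; rewrite !inE.
  by case: (boolP (x \in S)) => // /(fintype.subsetP sST).
by apply; apply/setP=> x; rewrite !inE; case: (x \in S).
Qed.

Lemma increasing_ge0 : normalized f -> increasing f -> forall S : {set 'I_k}, 0 <= f S.
Proof.
by move=> fnorm finc S; rewrite -fnorm; apply: increasing_le => //; exact: finset.sub0set.
Qed.

Lemma modular_sum1 : modular f -> normalized f ->
  forall S : {set 'I_k}, f S = \sum_(l in S) f [set l].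
Proof.
move=> fmod fnorm S; have [n ltSn] := ubnP #|S|; elim: n S ltSn => // n IH S.
have [-> _|[x xS] ltSn] := set_0Vmem S; first by rewrite big_set0 fnorm.
rewrite (big_setD1 x xS) -IH; last by rewrite (cardsD1 x) xS in ltSn.
have := fmod [set x] (S :\ x).
by rewrite finset.setD1K // disjoint_setI0 ?disjoints1 ?setD11 // fnorm addr0.
Qed.

Lemma modular_of_complement_le : submodular f -> normalized f ->
  (forall S : {set 'I_k}, f S + f (~: S) <= f [set: 'I_k]) -> modular f.
Proof.
move=> fsub fnorm compl_le.
have fC S : f (~: S) = f [set: 'I_k] - f S.
  have := fsub S (~: S); rewrite finset.setUCr finset.setICr fnorm addr0.
  have := compl_le S; lra.
move=> S T; have := fsub S T; have := fsub (~: S) (~: T).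
rewrite -finset.setCI -finset.setCU !fC; lra.
Qed.

End SetFunction.

Local Notation prefix := Defs.prefix.

Section Prefix.
Variables (k : nat) (s : {perm 'I_k}).

Lemma mem_prefix j i : (i \in prefix s j) = ((s^-1)%g i < j)%N.
Proof.
apply/imsetP/idP => [[m]|lt_ij]; first by rewrite inE => lt_mj ->; rewrite permK.
by exists ((s^-1)%g i); rewrite ?inE ?permKV.
Qed.

Lemma prefix0 : prefix s 0 = finset.set0.
Proof. by apply/setP => i; rewrite mem_prefix inE. Qed.

Lemma prefix_ord : prefix s k = [set: 'I_k].
Proof. by apply/setP => i; rewrite mem_prefix inE ltn_ord. Qed.

Lemma prefixS (i : 'I_k) : prefix s i.+1 = s i |: prefix s i.
Proof.
apply/setP => j; rewrite !inE !mem_prefix ltnS leq_eqVlt.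
by rewrite -(can2_eq (permKV s) (permK s)).
Qed.

Lemma perm_notin_prefix (i : 'I_k) : s i \notin prefix s i.
Proof. by rewrite mem_prefix permK ltnn. Qed.

End Prefix.

Section LovaszExtension.
Variables (R : realType) (k : nat) (f : {set 'I_k} -> R).
Hypotheses (fnorm : normalized f) (finc : increasing f).

Lemma sum_prefix_increments s :
  \sum_(i < k) (f (prefix s i.+1) - f (prefix s i)) = f [set: 'I_k].
Proof.
rewrite -(big_mkord xpredT (fun i => f (prefix s i.+1) - f (prefix s i))).
by rewrite telescope_sumr // prefix_ord prefix0 fnorm subr0.
Qed.

Lemma prefix_increment_ge0 s (i : 'I_k) : 0 <= f (prefix s i.+1) - f (prefix s i).
Proof. by rewrite subr_ge0 prefixS; apply: increasing_le => //; exact: finset.subsetUr. Qed.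

Lemma modular_prefix_increment s (i : 'I_k) : modular f ->
  f (prefix s i.+1) - f (prefix s i) = f [set s i].
Proof.
move=> fmod; have := fmod [set s i] (prefix s i).
rewrite disjoint_setI0 ?disjoints1 ?perm_notin_prefix // fnorm addr0 -prefixS => <-.
by rewrite addrK.
Qed.

Lemma lovasz_termD x y s :
  lovasz_term f (fun l => x l + y l) s = lovasz_term f x s + lovasz_term f y s.
Proof. by rewrite /lovasz_term -big_split; apply: eq_bigr => i _; rewrite mulrDl. Qed.

Lemma ler_lovasz_term x y s : (forall l, x l <= y l) ->
  lovasz_term f x s <= lovasz_term f y s.
Proof.
by move=> le_xy; apply: ler_sum => i _; apply: ler_wpM2r; [exact: prefix_increment_ge0|].
Qed.

Lemma lovasz_term_cst c s : lovasz_term f (fun=> c) s = c * f [set: 'I_k].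
Proof. by rewrite /lovasz_term -mulr_sumr sum_prefix_increments. Qed.

Lemma lovasz_ub x c : (forall l, x l <= c) -> lovasz f x <= c * f [set: 'I_k].
Proof.
move=> le_xc; have le_term s : lovasz_term f x s <= c * f [set: 'I_k].
  by rewrite -(lovasz_term_cst c s); apply: ler_lovasz_term.
by apply: bigmax_le => // s _; apply: le_term.
Qed.

Lemma lovasz_modular x : modular f -> lovasz f x = \sum_l x l * f [set l].
Proof.
move=> fmod; have term_eq s : lovasz_term f x s = \sum_l x l * f [set l].
  rewrite /lovasz_term [RHS](reindex_inj (@perm_inj _ s)) /=.
  by apply: eq_bigr => i _; rewrite modular_prefix_increment.
rewrite /lovasz; apply: (big_ind (fun v => v = \sum_l x l * f [set l])) => //.
by move=> _ _ -> ->; rewrite maxxx.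
Qed.

End LovaszExtension.

Section PairHingeRisk.
Variable R : realFieldType.

Definition pair_hinge_risk (a b t : R) := a * Num.max (1 - t) 0 + b * Num.max (1 + t) 0.

Lemma pair_hinge_risk_sign a b :
  pair_hinge_risk a b (if a < b then -1 else 1) = 2 * Num.min a b.
Proof.
rewrite /pair_hinge_risk /Num.min; case: ifP => _.
  by rewrite opprK addrN maxxx mulr0 addr0 max_l ?addr_ge0 // mulrC.
by rewrite subrr maxxx mulr0 add0r max_l ?addr_ge0 // mulrC.
Qed.

Lemma pair_hinge_risk_ge a b t : 0 <= a -> 0 <= b ->
  2 * Num.min a b <= pair_hinge_risk a b t.
Proof.
move=> a_ge0 b_ge0; rewrite /pair_hinge_risk.
set x := Num.max (1 - t) 0; set y := Num.max (1 + t) 0.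
have ge_x : 1 - t <= x by rewrite le_max lexx.
have x_ge0 : 0 <= x by rewrite le_max lexx orbT.
have ge_y : 1 + t <= y by rewrite le_max lexx.
have y_ge0 : 0 <= y by rewrite le_max lexx orbT.
rewrite /Num.min; case: ifP => [/ltW le_ab|/negbT]; last rewrite -leNgt => le_ba.
- have : a * y <= b * y by rewrite ler_wpM2r.
  have : a * 2 <= a * (x + y) by rewrite ler_wpM2l //; lra.
  rewrite mulrDr; lra.
- have : b * x <= a * x by rewrite ler_wpM2r.
  have : b * 2 <= b * (x + y) by rewrite ler_wpM2l //; lra.
  rewrite mulrDr; lra.
Qed.

Lemma pair_hinge_risk_wrong_sign a b t : 0 <= a -> 0 <= b ->
  (0 <= t /\ a < b) \/ (t <= 0 /\ b < a) ->
  2 * Num.min a b + `|a - b| <= pair_hinge_risk a b t.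
Proof.
move=> a_ge0 b_ge0 wrong; rewrite /pair_hinge_risk.
have : a * (1 - t) <= a * Num.max (1 - t) 0 by rewrite ler_wpM2l // le_max lexx.
have : b * (1 + t) <= b * Num.max (1 + t) 0 by rewrite ler_wpM2l // le_max lexx.
rewrite mulrBr mulrDr !mulr1 /Num.min.
case: wrong => [[t_ge0 lt_ab]|[t_le0 lt_ba]].
- rewrite lt_ab ltr0_norm ?subr_lt0 //.
  have : a * t <= b * t by rewrite ler_wpM2r // ltW.
  lra.
- rewrite ltNge (ltW lt_ba) /= gtr0_norm ?subr_gt0 //.
  have : a * t <= b * t by rewrite ler_wnM2r // ltW.
  lra.
Qed.

End PairHingeRisk.

Lemma lee_of_forall_mul1D (R : realFieldType) (x : \bar R) (a : R) : 0 <= a ->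
  (forall e, 0 < e -> (x <= ((1 + e) * a)%:E)%E) -> (x <= a%:E)%E.
Proof.
move=> a_ge0 x_le; apply/lee_addgt0Pr => e e_gt0.
have a1_gt0 : 0 < a + 1 by lra.
apply: (le_trans (x_le (e / (a + 1)) _)); first by rewrite divr_gt0.
rewrite -EFinD lee_fin mulrDl mul1r lerD2l mulrAC ler_pdivrMr //; nra.
Qed.

Section SignStar.
Variables (R : realType) (k : nat) (psi : ('I_k -> R) -> Ylab k).
Hypothesis hpsi : sign_star psi.

Lemma sign_star_ge0 u l : psi u l -> 0 <= u l.
Proof.
move=> psi_ul; rewrite leNgt; apply/negP => ul_lt0.
by move: psi_ul; rewrite hpsi ?lt_eqF // ltNge ltW.
Qed.

Lemma sign_star_le0 u l : ~~ psi u l -> u l <= 0.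
Proof.
move=> psi_ul; rewrite leNgt; apply/negP => ul_gt0.
by move: psi_ul; rewrite hpsi ?gt_eqF // ul_gt0.
Qed.

End SignStar.

Section Labels.
Context {R : realType} {k : nat}.

Definition cst_label (b : bool) : Ylab k := [ffun=> b].

Definition antipodal : Ylab k -> R :=
  fun y => ((y == cst_label true)%:R + (y == cst_label false)%:R) / 2.

Lemma sum_indicator_mul (a : Ylab k) (G : Ylab k -> R) :
  \sum_y (y == a)%:R * G y = G a.
Proof. by rewrite (bigD1 a) //= eqxx mul1r big1 ?addr0 // => y /negbTE ->; rewrite mul0r. Qed.

Lemma exp_loss_antipodal (A : Type) (L : A -> Ylab k -> R) a :
  exp_loss L antipodal a = (L a (cst_label true) + L a (cst_label false)) / 2.
Proof.
rewrite /exp_loss /antipodal mulrDl.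
under eq_bigr => y _ do rewrite mulrAC !mulrDl.
by rewrite big_split /= -!mulr_suml !sum_indicator_mul.
Qed.

Lemma antipodal_distr : is_distr antipodal.
Proof.
split=> [y|]; first by rewrite divr_ge0 ?addr_ge0 ?ler0n.
have := exp_loss_antipodal (fun (_ : unit) _ => 1) tt; rewrite /exp_loss.
under eq_bigr => y _ do rewrite mulr1.
by move=> ->; lra.
Qed.

Definition label_mass (p : Ylab k -> R) l b := \sum_(y : Ylab k | y l == b) p y.

Lemma sum_mul_label (p : Ylab k -> R) l (g : bool -> R) :
  \sum_y p y * g (y l) = label_mass p l true * g true + label_mass p l false * g false.
Proof.
rewrite /label_mass !mulr_suml (bigID (fun y : Ylab k => y l)) /=.
congr (_ + _); apply: eq_big => y; rewrite ?eqb_id ?eqbF_neg //.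
- by move=> ->.
- by move=> /negbTE ->.
Qed.

End Labels.

Section AntipodalRisks.
Variables (R : realType) (k : nat) (f : {set 'I_k} -> R).
Hypotheses (fnorm : normalized f) (finc : increasing f).

Lemma exp_target_loss_antipodal r : exp_loss (target_loss f) antipodal r =
  (f [set l | ~~ r l] + f [set l | r l]) / 2.
Proof.
rewrite exp_loss_antipodal /target_loss.
by congr ((f _ + f _) / 2); apply/setP => l; rewrite !inE ffunE; case: (r l).
Qed.

Lemma lovasz_hinge_antipodal_ge u :
  2 * f [set: 'I_k] <= lovasz_hinge f u (cst_label true) + lovasz_hinge f u (cst_label false).
Proof.
rewrite /lovasz_hinge.
apply: le_trans (lerD (le_bigmax _ _ 1%g) (le_bigmax _ _ 1%g)).
rewrite -lovasz_termD -(lovasz_term_cst fnorm 2 1%g); apply: ler_lovasz_term => // l.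
rewrite /yval !ffunE mulr1 mulrN1 opprK.
have : 1 - u l <= Num.max (1 - u l) 0 by rewrite le_max lexx.
have : 1 + u l <= Num.max (1 + u l) 0 by rewrite le_max lexx.
lra.
Qed.

Lemma lovasz_hinge_ub u y e : (forall l, `|u l| <= e) ->
  lovasz_hinge f u y <= (1 + e) * f [set: 'I_k].
Proof.
move=> u_le; apply: lovasz_ub => // l; have e_ge0 := le_trans (normr_ge0 _) (u_le l).
have /andP[le_u u_le'] : - e <= u l <= e by rewrite -ler_norml.
by rewrite ge_max; apply/andP; split; rewrite /yval; case: (y l); lra.
Qed.

End AntipodalRisks.

Section NonModular.
Variables (R : realType) (k : nat) (f : {set 'I_k} -> R) (psi : ('I_k -> R) -> Ylab k).
Hypotheses (fnorm : normalized f) (finc : increasing f) (hpsi : sign_star psi).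

Lemma not_calibrated_of_complement_gt (P : {set 'I_k}) :
  f [set: 'I_k] < f P + f (~: P) -> ~ calibrated (lovasz_hinge f) psi (target_loss f).
Proof.
move=> gtP cal; set fT := f [set: 'I_k] in gtP *.
pose rP : Ylab k := [ffun l => l \in P].
have rP_not_optimal u : psi u = rP -> ~ (forall r,
    exp_loss (target_loss f) antipodal (psi u) <= exp_loss (target_loss f) antipodal r).
  move=> -> /(_ (cst_label true)); rewrite !exp_target_loss_antipodal.
  have -> : [set l | ~~ rP l] = ~: P by apply/setP => l; rewrite !inE ffunE.
  have -> : [set l | rP l] = P by apply/setP => l; rewrite inE ffunE.
  have -> : [set l : 'I_k | ~~ cst_label true l] = finset.set0.
    by apply/setP => l; rewrite !inE ffunE.
  have -> : [set l : 'I_k | cst_label true l] = [set: 'I_k] by apply/setP => l; rewrite !inE ffunE.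
  rewrite fnorm -/fT; lra.
have inf_ge :
    (fT%:E <= ereal_inf [set (exp_loss (lovasz_hinge f) antipodal u)%:E | u in setT])%E.
  apply/ereal_infP => _ [u _ <-]; rewrite lee_fin exp_loss_antipodal.
  have := lovasz_hinge_antipodal_ge fnorm finc u; rewrite -/fT; lra.
have inf_le : (ereal_inf [set (exp_loss (lovasz_hinge f) antipodal u)%:E | u in
    [set u | ~ (forall r, exp_loss (target_loss f) antipodal (psi u)
                           <= exp_loss (target_loss f) antipodal r)%R]] <= fT%:E)%E.
  apply: lee_of_forall_mul1D => [|e e_gt0]; first exact: increasing_ge0.
  pose u l := if l \in P then e else - e.
  have u_norm l : `|u l| <= e by rewrite /u; case: (l \in P); rewrite ?normrN gtr0_norm.
  have psi_u : psi u = rP.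
    apply/ffunP => l; rewrite ffunE hpsi /u; last first.
      by case: (l \in P); rewrite ?oppr_eq0 gt_eqF.
    by case: (l \in P); rewrite ?e_gt0 // oppr_gt0 ltNge (ltW e_gt0).
  apply: ge_ereal_inf; exists (exp_loss (lovasz_hinge f) antipodal u)%:E.
    by exists u => //; apply: rP_not_optimal.
  rewrite lee_fin exp_loss_antipodal.
  have := lovasz_hinge_ub fnorm finc (cst_label true) u_norm.
  have := lovasz_hinge_ub fnorm finc (cst_label false) u_norm.
  rewrite -/fT; lra.
by have := cal antipodal antipodal_distr; rewrite ltNge (le_trans inf_le inf_ge).
Qed.

End NonModular.

Section Modular.
Variables (R : realType) (k : nat) (f : {set 'I_k} -> R) (psi : ('I_k -> R) -> Ylab k).
Hypotheses (fmod : modular f) (fnorm : normalized f) (finc : increasing f)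
  (hpsi : sign_star psi).

Lemma exp_lovasz_hinge_modular p u : exp_loss (lovasz_hinge f) p u =
  \sum_l f [set l] * pair_hinge_risk (label_mass p l true) (label_mass p l false) (u l).
Proof.
rewrite /exp_loss /lovasz_hinge.
under eq_bigr => y _ do rewrite lovasz_modular // mulr_sumr.
rewrite exchange_big /=; apply: eq_bigr => l _.
pose g (c : bool) := Num.max (1 - u l * (if c then 1 else -1)) 0.
rewrite (eq_bigr (fun y => f [set l] * (p y * g (y l)))) => [|y _]; last first.
  by rewrite /g; ring.
by rewrite -mulr_sumr sum_mul_label /g /pair_hinge_risk mulr1 mulrN1 opprK.
Qed.

Lemma exp_target_loss_modular p r :
  exp_loss (target_loss f) p r = \sum_l f [set l] * label_mass p l (~~ r l).
Proof.
rewrite /exp_loss /target_loss.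
under eq_bigr => y _ do rewrite (modular_sum1 fmod fnorm) big_mkcond mulr_sumr.
rewrite exchange_big /=; apply: eq_bigr => l _.
rewrite /label_mass mulr_sumr [RHS]big_mkcond; apply: eq_bigr => y _.
by rewrite inE; case: (r l); case: (y l); rewrite /= ?mulr0 // mulrC.
Qed.

Definition min_hinge_risk p :=
  \sum_l f [set l] * (2 * Num.min (label_mass p l true) (label_mass p l false)).

Lemma exp_lovasz_hinge_min p :
  exp_loss (lovasz_hinge f) p
    (fun l => if label_mass p l true < label_mass p l false then -1 else 1)
  = min_hinge_risk p.
Proof.
by rewrite exp_lovasz_hinge_modular; apply: eq_bigr => l _; rewrite pair_hinge_risk_sign.
Qed.

Lemma exp_lovasz_hinge_wrong_coordinate p u l : is_distr p ->
  label_mass p l (psi u l) < label_mass p l (~~ psi u l) ->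
  min_hinge_risk p + f [set l] * `|label_mass p l true - label_mass p l false|
    <= exp_loss (lovasz_hinge f) p u.
Proof.
move=> [p_ge0 _] wrong; have mass_ge0 j c : 0 <= label_mass p j c by apply: sumr_ge0.
have w_ge0 j : 0 <= f [set j] by apply: increasing_ge0.
rewrite exp_lovasz_hinge_modular /min_hinge_risk (bigD1 l) //= [X in _ <= X](bigD1 l) //=.
rewrite addrAC -mulrDr; apply: lerD.
  apply: ler_wpM2l => //; apply: pair_hinge_risk_wrong_sign => //.
  case psi_ul: (psi u l) wrong => /= wrong; [left|right]; split=> //.
    exact: (sign_star_ge0 hpsi).
  by apply: (sign_star_le0 hpsi); rewrite psi_ul.
by apply: ler_sum => j _; apply: ler_wpM2l => //; apply: pair_hinge_risk_ge.
Qed.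

Lemma wrong_coordinate_of_not_optimal p u :
  ~ (forall r, exp_loss (target_loss f) p (psi u) <= exp_loss (target_loss f) p r) ->
  exists2 l, 0 < f [set l] & label_mass p l (psi u l) < label_mass p l (~~ psi u l).
Proof.
move=> not_opt; have [/existsP[l /andP[w_gt0 wrong]]|/existsPn right] := boolP
  [exists l, (0 < f [set l]) && (label_mass p l (psi u l) < label_mass p l (~~ psi u l))].
  by exists l.
exfalso; apply: not_opt => r; rewrite !exp_target_loss_modular; apply: ler_sum => l _.
have w_ge0 : 0 <= f [set l] by apply: increasing_ge0.
have := right l; rewrite negb_and -!leNgt => /orP[w_le0|le_mass].
  have -> : f [set l] = 0 by apply/le_anti/andP; split.
  by rewrite !mul0r.
apply: ler_wpM2l => //.
by case: (r l); case: (psi u l) le_mass => //= le_mass; rewrite ?lexx.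
Qed.

Lemma calibrated_of_modular : calibrated (lovasz_hinge f) psi (target_loss f).
Proof.
move=> p p_distr.
pose gap l := f [set l] * `|label_mass p l true - label_mass p l false|.
pose d := \big[Num.min/1]_(l | 0 < gap l) gap l.
have d_gt0 : 0 < d.
  by apply: (big_ind (fun v => 0 < v)) => // x y x_gt0 y_gt0; rewrite lt_min x_gt0 y_gt0.
have inf_le : (ereal_inf [set (exp_loss (lovasz_hinge f) p u)%:E | u in setT]
               <= (min_hinge_risk p)%:E)%E.
  apply: ge_ereal_inf; exists (min_hinge_risk p)%:E => //.
  by exists (fun l => if label_mass p l true < label_mass p l false then -1 else 1);
    rewrite ?exp_lovasz_hinge_min.
apply: (le_lt_trans inf_le); apply: (@lt_le_trans _ _ (min_hinge_risk p + d)%:E).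
  by rewrite lte_fin ltrDl.
apply/ereal_infP => _ [u /wrong_coordinate_of_not_optimal [l w_gt0 wrong] <-].
rewrite lee_fin; apply: le_trans (exp_lovasz_hinge_wrong_coordinate p_distr wrong).
rewrite lerD2l; apply: bigmin_le_cond; rewrite /gap mulr_gt0 // normr_gt0 subr_eq0.
by case: (psi u l) wrong => /= wrong; [rewrite lt_eqF | rewrite gt_eqF].
Qed.

End Modular.

Theorem theorem3 (R : realType) (k : nat) (hk : (0 < k)%N)
  (f : {set 'I_k} -> R)
  (fsub : submodular f) (fnorm : normalized f) (finc : increasing f)
  (psi : ('I_k -> R) -> Ylab k) (hpsi : sign_star psi) :
  calibrated (lovasz_hinge f) psi (target_loss f) <-> modular f.
Proof.
split=> [cal|fmod]; last exact: calibrated_of_modular.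
apply: modular_of_complement_le => // S; rewrite leNgt; apply/negP => gtS.
exact: not_calibrated_of_complement_gt gtS cal.
Qed.
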